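(* Let $m\ge3$, $C$ a set of $m$ candidates, $T$ the set of all $m!$ strict rankings of $C$, $w=(w_1,\dots,w_m)$ with $1=w_1\ge\cdots\ge w_m=0$, and $\sigma_t(\alpha)=w_i$ where $i$ is the position of $\alpha$ in $t\in T$. Let $(N_t)_{t\in T}$ be nonnegative integers and $|\alpha|=\sum_tN_t\sigma_t(\alpha)$. Suppose $|a|>|\alpha|$ for all $\alpha\ne a$, and $b\ne a$ satisfies $|b|\ge|\alpha|$ for all $\alpha\ne a$. Let $\bar T_{ba}$ be the set of types ranking $b$ above $a$, $T_b$ the set of types ranking $b$ first, $T_i$ ($1\le i\le m-1$) the set of types ranking $b$ in position $i$ and $a$ in position $i+1$, and $T_{ba}=\bigcup_{i=1}^{m-1}T_i$. Let $Q_3(b)$ be the optimal value (or $+\infty$ if infeasible) of: minimize $\sum_{t\in\bar T_{ba}}x_t$ subject to $$\sum_{t\in T_b}y_t(1-\sigma_t(\alpha))-\sum_{t\in\bar T_{ba}}x_t(\sigma_t(b)-\sigma_t(\alpha))\ge|\alpha|-|b|\quad\forall\alpha\ne b,$$ $\sum_{t\in T_b}y_t=\sum_{t\in\bar T_{ba}}x_t$, $x_t\ge0$, $y_t\ge0$ (real variables). Let $Q$ be the optimal value (or $+\infty$ if infeasible) of the same linear program with $\bar T_{ba}$ replaced by $T_{ba}$ throughout (in the objective, in the constraints, and in the index set of the variables $x_t$). Then $Q_3(b)=Q$. *)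

From HB Require Import structures.
From mathcomp Require Import all_boot all_order all_algebra.
From mathcomp Require Import all_classical all_reals ereal.
Set Implicit Arguments. Unset Strict Implicit. Unset Printing Implicit Defensive.
Import Order.TTheory GRing.Theory Num.Theory.
Local Open Scope ring_scope.
Local Open Scope classical_set_scope.

Section Voting.
Variables (R : realType) (C : finType) (m : nat).

(* A strict ranking of C: an injective map candidate -> position (0-indexed,
   position 0 = top).  Since #|C| = m these are exactly the m! bijections. *)
Definition ranking := {ffun C -> 'I_m}.
Definition rankings : {set ranking} := [set t : ranking | injectiveb t].

(* weight vector w : nat -> R, w i = paper's w_{i+1} *)
Definition sigma (w : nat -> R) (t : ranking) (al : C) : R := w (t al).

Definition score (w : nat -> R) (N : ranking -> nat) (al : C) : R :=
  \sum_(t in rankings) (N t)%:R * sigma w t al.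

Definition Tbar_ba (a b : C) : {set ranking} :=
  [set t in rankings | (t b < t a)%N].
Definition T_b (b : C) : {set ranking} :=
  [set t in rankings | (t b == 0 :> nat)].
(* T_i (paper, 1 <= i <= m-1): b in position i and a in position i+1;
   here indexed 0-based by i < m-1 : b at 0-based position i, a at i+1 *)
Definition T_i (a b : C) (i : nat) : {set ranking} :=
  [set t in rankings | (t b == i :> nat) && (t a == i.+1 :> nat)].
Definition T_ba (a b : C) : {set ranking} :=
  \bigcup_(i < m.-1) T_i a b i.

Definition LPfeasible (w : nat -> R) (N : ranking -> nat) (a b : C)
    (S : {set ranking}) (x y : ranking -> R) : Prop :=
  [/\ forall al, al != b ->
        \sum_(t in T_b b) y t * (1 - sigma w t al)
        - \sum_(t in S) x t * (sigma w t b - sigma w t al)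
        >= score w N al - score w N b,
      \sum_(t in T_b b) y t = \sum_(t in S) x t,
      forall t, t \in S -> 0 <= x t &
      forall t, t \in T_b b -> 0 <= y t].

(* optimal value (infimum; +oo if infeasible) *)
Definition LPvalue (w : nat -> R) (N : ranking -> nat) (a b : C)
    (S : {set ranking}) : \bar R :=
  ereal_inf [set z : \bar R | exists x y, LPfeasible w N a b S x y /\
                               z = (\sum_(t in S) x t)%:E].

End Voting.

From HB Require Import structures.
From mathcomp Require Import all_boot all_order all_algebra.
From mathcomp Require Import all_classical all_reals ereal.
From mathcomp Require Import zify lra.
Set Implicit Arguments. Unset Strict Implicit. Unset Printing Implicit Defensive.
Import Order.TTheory GRing.Theory Num.Theory.
Local Open Scope ring_scope.

(** Since [T_ba] is contained in [Tbar_ba], a feasible point of the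
    [T_ba]-program extends by zero to one of the [Tbar_ba]-program.
    Conversely, a type ranking b above a is sent into [T_ba] by moving b
    down to the position just above a, the candidates in between moving up
    by one.  This does not increase [sigma_t(b) - sigma_t(al)] for any
    candidate al, so pushing the mass [x_t] forward along this map preserves
    feasibility and the objective. *)

Definition slide (i j k : nat) : nat := if (i < k < j)%N then k.-1 else k.

Lemma slide_inj i j k l : k != i -> l != i -> slide i j k = slide i j l -> k = l.
Proof. by rewrite /slide; do 2 case: ifP; lia. Qed.

Lemma slide_neq_pred i j k : (i < j)%N -> k != i -> slide i j k != j.-1.
Proof. by rewrite /slide; case: ifP; lia. Qed.

Lemma slide_gap (R : realDomainType) (w : nat -> R) n i j k :
  (forall p q : nat, (p <= q)%N -> (q < n)%N -> w q <= w p) ->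
  (i < j < n)%N -> (k < n)%N -> w j.-1 - w (slide i j k) <= w i - w k.
Proof.
move=> w_dec /andP[lt_ij lt_jn] lt_kn; rewrite /slide.
case: ifP => [/andP[lt_ik lt_kj]|_].
- have : w j.-1 <= w k.-1 by apply: w_dec; lia.
  have : w k <= w i by apply: w_dec; lia.
  lra.
- suff : w j.-1 <= w i by lra.
  by apply: w_dec; lia.
Qed.

Definition ord_predn {m} (k : 'I_m) : 'I_m :=
  Ordinal (leq_ltn_trans (leq_pred k) (ltn_ord k)).

Section MoveNextTo.
Variables (C : finType) (m : nat) (a b : C).

Definition move_next_to (t : ranking C m) : ranking C m :=
  [ffun c => if c == b then ord_predn (t a)
             else if (t b < t c < t a)%N then ord_predn (t c) else t c].

Lemma move_next_toE t c :
  val (move_next_to t c) = if c == b then (t a).-1 else slide (t b) (t a) (t c).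
Proof. by rewrite ffunE /slide; case: ifP => //; case: ifP. Qed.

Lemma move_next_to_injective (t : ranking C m) :
  injective t -> (t b < t a)%N -> injective (move_next_to t).
Proof.
move=> t_inj ltba.
have t_neq_b c : c != b -> (t c : nat) != t b.
  by move=> ncb; apply: contra ncb => /eqP/val_inj/t_inj ->.
move=> c1 c2 /(congr1 val); rewrite !move_next_toE.
case: (eqVneq c1 b) => [->|n1]; case: (eqVneq c2 b) => [->|n2] // E.
- by move: (slide_neq_pred ltba (t_neq_b _ n2)); rewrite -E eqxx.
- by move: (slide_neq_pred ltba (t_neq_b _ n1)); rewrite E eqxx.
- by apply/t_inj/val_inj; exact: slide_inj (t_neq_b _ n1) (t_neq_b _ n2) E.
Qed.

Hypothesis neq_ba : b != a.

Lemma move_next_to_T_ba t : t \in Tbar_ba m a b -> move_next_to t \in T_ba m a b.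
Proof.
rewrite !inE => /andP[/injectiveP t_inj ltba].
have lt_pred : ((t a).-1 < m.-1)%N by have := ltn_ord (t a); lia.
apply/bigcupP; exists (Ordinal lt_pred) => //.
rewrite !inE !move_next_toE eqxx [a == b]eq_sym (negbTE neq_ba) /slide ltnn andbF /=.
rewrite (ltn_predK ltba) !eqxx !andbT.
by apply/injectiveP; apply: move_next_to_injective t_inj ltba.
Qed.

Lemma sigma_gap_move_next_to (R : realType) (w : nat -> R) t al :
  (forall i j : nat, (i <= j)%N -> (j < m)%N -> w j <= w i) ->
  t \in Tbar_ba m a b -> al != b ->
  sigma w (move_next_to t) b - sigma w (move_next_to t) al
    <= sigma w t b - sigma w t al.
Proof.
move=> w_dec; rewrite inE => /andP[_ ltba] nalb.
rewrite /sigma !move_next_toE eqxx (negbTE nalb).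
by apply: slide_gap w_dec _ (ltn_ord _); rewrite ltba ltn_ord.
Qed.

Lemma T_ba_sub : T_ba m a b \subset Tbar_ba m a b.
Proof.
apply/fintype.subsetP => t /bigcupP[i _]; rewrite !inE => /and3P[-> /eqP-> /eqP->].
by rewrite ltnSn.
Qed.

End MoveNextTo.

Section LPTransfer.
Variables (R : realType) (C : finType) (m : nat).
Variables (w : nat -> R) (N : ranking C m -> nat) (a b : C).

Lemma sum_extend_by_zero (S S' : {set ranking C m}) (F : ranking C m -> R) :
  S \subset S' ->
  \sum_(t in S') (if t \in S then F t else 0) = \sum_(t in S) F t.
Proof.
move=> sSS'; rewrite -big_mkcondr; apply: eq_bigl => t.
by case: (boolP (t \in S)) => [/(fintype.subsetP sSS') ->|_]; rewrite ?andbF.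
Qed.

Lemma LPfeasible_extend_by_zero (S S' : {set ranking C m}) x y :
  S \subset S' -> LPfeasible w N a b S x y ->
  LPfeasible w N a b S' (fun t => if t \in S then x t else 0) y.
Proof.
move=> sSS' [ineq eq x_ge0 y_ge0].
have extend F : \sum_(t in S') (if t \in S then x t else 0) * F t
                = \sum_(t in S) x t * F t.
  rewrite -(sum_extend_by_zero _ sSS'); apply: eq_bigr => t _.
  by case: ifP; rewrite ?mul0r.
split=> //.
- by move=> al nalb; rewrite extend; apply: ineq.
- by rewrite eq sum_extend_by_zero.
- by move=> t _; case: ifP => // /x_ge0.
Qed.

Variables (S S' : {set ranking C m}) (f : ranking C m -> ranking C m).
Hypothesis f_in : {in S', forall t, f t \in S}.

Definition pushforward (x : ranking C m -> R) (j : ranking C m) : R :=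
  \sum_(t in S' | f t == j) x t.

Lemma sum_pushforward (x F : ranking C m -> R) :
  \sum_(t in S') x t * F (f t) = \sum_(j in S) pushforward x j * F j.
Proof.
rewrite (partition_big f (mem S)) //; apply: eq_bigr => j _.
by rewrite mulr_suml; apply: eq_bigr => t /andP[_ /eqP->].
Qed.

Lemma sum_pushforward1 (x : ranking C m -> R) :
  \sum_(t in S') x t = \sum_(j in S) pushforward x j.
Proof.
exact: partition_big.
Qed.

Hypothesis f_gap : {in S', forall t al, al != b ->
  sigma w (f t) b - sigma w (f t) al <= sigma w t b - sigma w t al}.

Lemma LPfeasible_pushforward x y :
  LPfeasible w N a b S' x y -> LPfeasible w N a b S (pushforward x) y.
Proof.
move=> [ineq eq x_ge0 y_ge0]; split=> //.
- move=> al nalb; apply: le_trans (ineq al nalb) _.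
  rewrite lerD2l lerN2 -(sum_pushforward x (fun j => sigma w j b - sigma w j al)).
  by apply: ler_sum => t St; rewrite ler_wpM2l ?x_ge0 ?f_gap.
- by rewrite eq sum_pushforward1.
- by move=> j _; apply: sumr_ge0 => t /andP[/x_ge0].
Qed.

Lemma LPvalue_retract : S \subset S' -> LPvalue w N a b S' = LPvalue w N a b S.
Proof.
move=> sSS'; congr ereal_inf; apply/seteqP; split=> _ [x [y [feas ->]]].
- exists (pushforward x), y; split; first exact: LPfeasible_pushforward.
  by rewrite sum_pushforward1.
- exists (fun t => if t \in S then x t else 0), y.
  by rewrite sum_extend_by_zero //; split=> //; apply: LPfeasible_extend_by_zero.
Qed.

End LPTransfer.

Theorem proposition8 (R : realType) (C : finType) (m : nat)
  (hm : (3 <= m)%N) (hC : #|C| = m)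
  (w : nat -> R) (hw1 : w 0%N = 1) (hwm : w m.-1 = 0)
  (hwdec : forall i j : nat, (i <= j)%N -> (j < m)%N -> w j <= w i)
  (N : ranking C m -> nat) (a b : C)
  (ha : forall al : C, al != a -> score w N al < score w N a)
  (hba : b != a)
  (hb : forall al : C, al != a -> score w N al <= score w N b) :
  LPvalue w N a b (@Tbar_ba C m a b) = LPvalue w N a b (@T_ba C m a b).
Proof.
apply: (LPvalue_retract N a (move_next_to_T_ba hba)).
- by move=> t Tt al; apply: sigma_gap_move_next_to.
- exact: T_ba_sub.
Qed.
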